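(* Let $(A,f)$ be a finite-dimensional quadratic Lie algebra over a field $\mathbb{K}$ of characteristic zero, let $B$ be a finite-dimensional Lie algebra and $\phi\colon B\to \mathrm{Der}_f(A)$ a Lie algebra homomorphism, and let $(A_B,f_B)$ be the double extension of $(A,f)$ by $(B,\phi)$. If $A_B$ is $t$-step nilpotent, then $A$ is $n$-step nilpotent for some $n\leq t$.
   Context: A quadratic Lie algebra $(A,f)$ is a Lie algebra $A$ with a non-degenerate symmetric bilinear form $f$ that is invariant: $f([x,y],z)+f(y,[x,z])=0$ for all $x,y,z$. $\mathrm{Der}_f(A)$ denotes the Lie algebra of derivations $d$ of $A$ with $f(d(x),y)+f(x,d(y))=0$. Let $w\colon A\times A\to B^*$ be $w(a,a')(b)=f(\phi(b)(a),a')$, and $\mathrm{ad}^*$ the coadjoint action, $\mathrm{ad}^*(b)(\beta)(b')=-\beta([b,b'])$. The double extension is the vector space $A_B=B\oplus A\oplus B^*$ with bracket $[b+a+\beta,b'+a'+\beta']=[b,b']_B+\phi(b)(a')-\phi(b')(a)+[a,a']_A+w(a,a')+\mathrm{ad}^*(b)(\beta')-\mathrm{ad}^*(b')(\beta)$ and form $f_B(b+a+\beta,b'+a'+\beta')=\beta(b')+\beta'(b)+f(a,a')$. A Lie algebra $L$ is $t$-step nilpotent if $L^{t+1}=0$ and $L^t\neq 0$, where $L^1=L$, $L^{k+1}=[L,L^k]$. *)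

From HB Require Import structures.
From mathcomp Require Import all_boot all_order all_algebra.
Set Implicit Arguments. Unset Strict Implicit. Unset Printing Implicit Defensive.
Import GRing.Theory.
Local Open Scope ring_scope.

Section Lie.
Variable K : fieldType.

Definition lie_algebra (V : lmodType K) (br : V -> V -> V) : Prop :=
  [/\ (forall (a : K) x y z, br (a *: x + y) z = a *: br x z + br y z),
      (forall (a : K) x y z, br z (a *: x + y) = a *: br z x + br z y),
      (forall x, br x x = 0) &
      (forall x y z, br x (br y z) + br y (br z x) + br z (br x y) = 0)].

Definition quadratic_lie (V : lmodType K) (br : V -> V -> V) (f : V -> V -> K) : Prop :=
  [/\ lie_algebra br,
      (forall (a : K) x y z, f (a *: x + y) z = a * f x z + f y z),
      (forall x y, f x y = f y x),
      (forall x, (forall y, f x y = 0) -> x = 0) &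
      (forall x y z, f (br x y) z + f y (br x z) = 0)].

Definition derivation_f (V : lmodType K) (br : V -> V -> V) (f : V -> V -> K)
    (d : V -> V) : Prop :=
  [/\ (forall (a : K) x y, d (a *: x + y) = a *: d x + d y),
      (forall x y, d (br x y) = br (d x) y + br x (d y)) &
      (forall x y, f (d x) y + f x (d y) = 0)].

Definition lie_hom_Derf (A B : lmodType K) (brA : A -> A -> A) (f : A -> A -> K)
    (brB : B -> B -> B) (phi : B -> A -> A) : Prop :=
  [/\ (forall b, derivation_f brA f (phi b)),
      (forall (c : K) b b' x, phi (c *: b + b') x = c *: phi b x + phi b' x) &
      (forall b b' x, phi (brB b b') x = phi b (phi b' x) - phi b' (phi b x))].

Inductive brspan (V : lmodType K) (br : V -> V -> V) (S : V -> Prop) : V -> Prop :=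
  | brspan_br x s : S s -> brspan br S (br x s)
  | brspan_0 : brspan br S 0
  | brspan_D u v : brspan br S u -> brspan br S v -> brspan br S (u + v)
  | brspan_Z (a : K) u : brspan br S u -> brspan br S (a *: u).

(* Lower central series: L^1 = L, L^{k+1} = [L, L^k] (L^0 := L by convention). *)
Fixpoint lcs (V : lmodType K) (br : V -> V -> V) (n : nat) : V -> Prop :=
  match n with
  | 0 => fun _ => True
  | k.+1 => if k is 0 then fun _ => True else brspan br (lcs br k)
  end.

(* L is t-step nilpotent: L^{t+1} = 0 and L^t <> 0; the zero algebra is
   (by convention) 0-step nilpotent. *)
Definition step_nilpotent (V : lmodType K) (br : V -> V -> V) (t : nat) : Prop :=
  (forall x, lcs br t.+1 x -> x = 0) /\
  (t = 0%N \/ exists x, lcs br t x /\ x <> 0).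

Variables (A B : vectType K).
Variables (brA : A -> A -> A) (f : A -> A -> K) (brB : B -> B -> B)
          (phi : B -> A -> A).

(* B^* represented as 'Hom(B, K). *)
Definition dualB := 'Hom(B, K^o).

Definition wmap (a a' : A) : dualB := linfun (fun b : B => (f (phi b a) a' : K^o)).

Definition coad (b : B) (beta : dualB) : dualB :=
  linfun (fun b' : B => - beta (brB b b')).

(* The double extension A_B = B (+) A (+) B^* *)
Definition DE := (B * (A * dualB))%type.

Definition de_bracket (x y : DE) : DE :=
  let: (b, (a, beta)) := x in
  let: (b', (a', beta')) := y in
  (brB b b',
   (phi b a' - phi b' a + brA a a',
    wmap a a' + coad b beta' - coad b' beta)).

(* The form f_B (not needed for the statement, recorded for completeness). *)
Definition de_form (x y : DE) : K :=
  let: (b, (a, beta)) := x in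
  let: (b', (a', beta')) := y in
  beta b' + beta' b + f a a'.

End Lie.

From HB Require Import structures.
From mathcomp Require Import all_boot all_order all_algebra.
From Stdlib Require Import Classical.
Set Implicit Arguments. Unset Strict Implicit. Unset Printing Implicit Defensive.
Import GRing.Theory.
Local Open Scope ring_scope.

(* The elements of A_B with zero B-component form a subalgebra A (+) B^*, on
   which the projection to A is a surjective Lie homomorphism; hence every
   term A^k of the lower central series of A is the image of part of A_B^k.
   So A^(t+1) = 0, and A is n-step nilpotent for the least n with
   A^(n+1) = 0.  Neither the characteristic nor the form f plays a role. *)

Section LowerCentralSeries.
Variable K : fieldType.

Lemma step_nilpotent_le (V : lmodType K) (br : V -> V -> V) (t : nat) :
  (forall x, lcs br t.+1 x -> x = 0) ->
  exists2 n : nat, (n <= t)%N & step_nilpotent br n.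
Proof.
elim: t => [|m IH] lcs0; first by exists 0%N => //; split => //; left.
case: (classic (exists2 x, lcs br m.+1 x & x <> 0)) => [[x lcsx x_neq0] | lcsm0].
  by exists m.+1 => //; split => //; right; exists x.
have [n le_nm nil_n] : exists2 n : nat, (n <= m)%N & step_nilpotent br n.
  by apply: IH => x lcsx; apply: NNPP => x_neq0; apply: lcsm0; exists x.
by exists n => //; apply: leqW.
Qed.

Section Lift.
Variables (V W : lmodType K) (brV : V -> V -> V) (brW : W -> W -> W).
Variables (S : W -> Prop) (p : W -> V).
Hypotheses (S0 : S 0) (SD : forall w w', S w -> S w' -> S (w + w'))
  (SZ : forall a w, S w -> S (a *: w))
  (Sbr : forall w w', S w -> S w' -> S (brW w w')).
Hypotheses (pD : forall w w', p (w + w') = p w + p w')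
  (pZ : forall a w, p (a *: w) = a *: p w)
  (p_br : forall w w', S w -> S w' -> p (brW w w') = brV (p w) (p w'))
  (p_onto : forall v, exists2 w, S w & p w = v).

Let p0 : p 0 = 0.
Proof. by have := pZ 0 0; rewrite !scale0r. Qed.

Lemma lcs_lift k v : lcs brV k v -> exists w, [/\ S w, lcs brW k w & p w = v].
Proof.
have lift_any v' : exists w, [/\ S w, lcs brW 0 w & p w = v'].
  by have [w Sw pw] := p_onto v'; exists w.
case: k v => [|k] v; first by move=> _; exact: lift_any.
elim: k v => [|k IH] v; first by move=> _; exact: lift_any.
elim=> [x s /IH [w' [Sw' lcsw' <-]] | | u u' _ [w [Sw lcsw <-]] _ [w' [Sw' lcsw' <-]]
       | a u _ [w [Sw lcsw <-]]].
- have [w Sw <-] := p_onto x.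
  by exists (brW w w'); split; [exact: Sbr | exact: brspan_br | exact: p_br].
- by exists 0; split; [exact: S0 | exact: brspan_0 | exact: p0].
- by exists (w + w'); split; [exact: SD | exact: brspan_D | exact: pD].
- by exists (a *: w); split; [exact: SZ | exact: brspan_Z | exact: pZ].
Qed.

Lemma lcs_eq0_lift k :
  (forall w, lcs brW k w -> w = 0) -> forall v, lcs brV k v -> v = 0.
Proof.
by move=> lcsW0 v /lcs_lift [w [_ /lcsW0 -> <-]]; exact: p0.
Qed.

End Lift.
End LowerCentralSeries.

Section DoubleExtension.
Variables (K : fieldType) (A B : vectType K).
Variables (brA : A -> A -> A) (f : A -> A -> K) (brB : B -> B -> B)
  (phi : B -> A -> A).
Hypotheses (brB_lie : lie_algebra brB) (phi_hom : lie_hom_Derf brA f brB phi).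

Local Notation brAB := (de_bracket brA f brB phi).

Lemma phi0 x : phi 0 x = 0.
Proof.
have [_ phiZ _] := phi_hom.
by have := phiZ (-1) 0 0 x; rewrite scaler0 add0r scaleN1r addNr.
Qed.

Lemma lcs_de_eq0 k :
  (forall w, lcs brAB k w -> w = 0) -> forall x, lcs brA k x -> x = 0.
Proof.
have [_ _ brB0 _] := brB_lie.
apply: (@lcs_eq0_lift _ _ _ _ _ (fun w : DE A B => w.1 = 0) (fun w => w.2.1)).
- by [].
- by move=> [b [a beta]] [b' [a' beta']] /= -> ->; rewrite addr0.
- by move=> c [b [a beta]] /= ->; rewrite scaler0.
- by move=> [b [a beta]] [b' [a' beta']] /= -> ->.
- by [].
- by [].
- by move=> [b [a beta]] [b' [a' beta']] /= -> ->; rewrite !phi0 subrr add0r.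
- by move=> x; exists (0, (x, 0)).
Qed.

End DoubleExtension.

Theorem lemma2p5 (K : fieldType) (A B : vectType K)
    (brA : A -> A -> A) (f : A -> A -> K) (brB : B -> B -> B)
    (phi : B -> A -> A) (t : nat) :
  [pchar K] =i pred0 ->
  quadratic_lie brA f ->
  lie_algebra brB ->
  lie_hom_Derf brA f brB phi ->
  step_nilpotent (@de_bracket K A B brA f brB phi) t ->
  exists2 n : nat, (n <= t)%N & step_nilpotent brA n.
Proof.
move=> _ _ brB_lie phi_hom [lcs_t0 _].
exact/step_nilpotent_le/(lcs_de_eq0 brB_lie phi_hom lcs_t0).
Qed.
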